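(* Let $k$ be odd and, for $1\le m\le n$, let $C_m$ be the set of positions with exactly $m$ coordinates in $\{0,k-1\}$ and all other coordinates equal to $(k-1)/2$. Then every combination $g$ satisfies $g(C_m)=C_m$ for all $m$, and $$\prod_{m=1}^{n}\operatorname{sgn}\big(g|_{C_m}\big)=1.$$ Equivalently, the quantity $C=\prod_{m=1}^n\operatorname{sgn}(\sigma_m)$, where $\sigma_m$ is the permutation of the cubies of $C_m$ relating a state to a fixed reference state, is preserved by every combination.
   Context: Fix integers $k\ge2$, $n\ge3$, $M=\{0,\dots,k-1\}$. Positions are $p\in M^n$. For distinct $i,j$, $\psi_{i,j}:M^n\to M^n$ is $(\psi_{i,j}p)_i=k-1-p_j$, $(\psi_{i,j}p)_j=p_i$, other coordinates unchanged. A move is given by distinct $i,j$ and constants $c_l\in M$ ($l\notin\{i,j\}$): it sends each position $p$ with $p_l=c_l$ ($l\notin\{i,j\}$) to $\psi_{i,j}(p)$ and fixes the other positions; a combination is a finite sequence of moves, regarded as the composite permutation of $M^n$. *)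

From HB Require Import structures.
From mathcomp Require Import all_boot all_order all_algebra all_fingroup.
Set Implicit Arguments. Unset Strict Implicit. Unset Printing Implicit Defensive.

Definition pos (n k : nat) := {ffun 'I_n -> 'I_k}.

Definition psi (n k : nat) (i j : 'I_n) (p : pos n k) : pos n k :=
  [ffun l => if l == i then rev_ord (p j) else if l == j then p i else p l].

(* The move given by i, j and constants c_l (l not in {i,j}); the entries
   c i, c j are irrelevant. *)
Definition move_fun (n k : nat) (i j : 'I_n) (c : pos n k) (p : pos n k) : pos n k :=
  if [forall l, ((l != i) && (l != j)) ==> (p l == c l)] then psi i j p else p.

Definition apply_moves (n k : nat) (s : seq ('I_n * 'I_n * pos n k)) (p : pos n k)
  : pos n k :=
  foldl (fun q m => move_fun m.1.1 m.1.2 m.2 q) p s.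

Definition is_combination (n k : nat) (g : {perm pos n k}) : Prop :=
  exists s : seq ('I_n * 'I_n * pos n k),
    all (fun m => m.1.1 != m.1.2) s /\ forall p, g p = apply_moves s p.

Definition Cset (n k m : nat) : {set pos n k} :=
  [set p : pos n k |
    [forall l, ((p l : nat) \notin [:: 0; k.-1]) ==> ((p l : nat) == k./2)] &&
    (#|[set l | (p l : nat) \in [:: 0; k.-1]]| == m)].

From HB Require Import structures.
From mathcomp Require Import all_boot all_order all_algebra all_fingroup zify.
Import GRing.Theory.
Set Implicit Arguments. Unset Strict Implicit. Unset Printing Implicit Defensive.

(* A move (i, j, c) only affects the positions whose coordinates outside {i, j}
   agree with c, and on this slice it is the quarter-turn (a, b) |-> (k-1-b, a)
   of the two free coordinates. A slice meets the sets C_m only when every fixed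
   coordinate c_l is extreme (0 or k-1) or central ((k-1)/2); if t of them are
   extreme, a slice point lies in C_(t+e) where e is the number of its extreme
   free coordinates. The quarter-turn fixes the centre and permutes the four
   points with two extreme coordinates, and the four with one extreme and one
   central coordinate, as two 4-cycles, in C_(t+2) and C_(t+1). So a move is odd
   on exactly two of the C_m and even on the others, and the product of the signs
   is multiplicative along a combination. *)

Lemma odd_perm_4cycle (T : finType) (r : {perm T}) (a b c d : T) :
  uniq [:: a; b; c; d] ->
  r a = b -> r b = c -> r c = d -> r d = a ->
  (forall x, r x != x -> x \in [:: a; b; c; d]) ->
  odd_perm r.
Proof.
rewrite /= !inE !negb_or => /and4P[/and3P[ab ac ad] /andP[bc bd] cd _].
move=> ra rb rc rd rx.
suff -> : r = (tperm a b * tperm a c * tperm a d)%g.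
  by rewrite !odd_permM !odd_tperm ab ac ad.
have [ba ca da] : [/\ b != a, c != a & d != a] by split; rewrite eq_sym.
have [cb db dc] : [/\ c != b, d != b & d != c] by split; rewrite eq_sym.
apply/permP => x; rewrite !permM.
have [->|xa] := eqVneq x a; first by rewrite ra tpermL !tpermD.
have [->|xb] := eqVneq x b; first by rewrite rb tpermR tpermL tpermD.
have [->|xc] := eqVneq x c; first by rewrite rc [tperm a b c]tpermD // tpermR tpermL.
have [->|xd] := eqVneq x d.
  by rewrite rd [tperm a b d]tpermD // [tperm a c d]tpermD // tpermR.
have /negPn/eqP -> : ~~ (r x != x).
  by apply/negP => /rx; rewrite !inE (negbTE xa) (negbTE xb) (negbTE xc) (negbTE xd).
by rewrite !tpermD // eq_sym.
Qed.

Definition restr_sign (T : finType) (S : {set T}) (g : {perm T}) : int :=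
  ((-1) ^+ odd_perm (restr_perm S g))%R.

Lemma restr_sign1 (T : finType) (S : {set T}) : restr_sign S 1%g = 1%R.
Proof. by rewrite /restr_sign morph1 odd_perm1. Qed.

Lemma restr_signM (T : finType) (S : {set T}) (g h : {perm T}) :
  g \in 'N(S | 'P)%g -> h \in 'N(S | 'P)%g ->
  restr_sign S (g * h)%g = (restr_sign S g * restr_sign S h)%R.
Proof. by move=> gS hS; rewrite /restr_sign morphM // odd_permM signr_addb. Qed.

Section SpecialValues.
Variables (k : nat) (hk : 1 < k).

Lemma half_lt : k./2 < k.
Proof. lia. Qed.

Definition lo : 'I_k := Ordinal (ltnW hk).
Definition hi : 'I_k := rev_ord lo.
Definition mid : 'I_k := Ordinal half_lt.

Definition extreme (v : 'I_k) : bool := v \in [:: lo; hi].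
Definition special (v : 'I_k) : bool := v \in [:: lo; mid; hi].

Hypothesis hodd : odd k.

Lemma special_eqF :
  ((lo == mid) = false) * ((mid == lo) = false) * ((lo == hi) = false) *
  ((hi == lo) = false) * ((mid == hi) = false) * ((hi == mid) = false).
Proof.
by rewrite -!val_eqE /=; have := odd_double_half k; rewrite hodd; repeat split; lia.
Qed.

Lemma extreme_values : (extreme lo * (extreme mid = false) * extreme hi)%type.
Proof. by rewrite /extreme !inE !special_eqF !eqxx. Qed.

Lemma special_values : (special lo * special mid * special hi)%type.
Proof. by rewrite /special !inE !eqxx !orbT. Qed.

Lemma rev_hi : rev_ord hi = lo.
Proof. exact: rev_ordK. Qed.

Lemma rev_mid : rev_ord mid = mid.
Proof. by apply: val_inj => /=; have := odd_double_half k; rewrite hodd; lia. Qed.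

Lemma extreme_rev v : extreme (rev_ord v) = extreme v.
Proof. by rewrite /extreme !inE !(can2_eq rev_ordK rev_ordK) rev_hi orbC. Qed.

Lemma special_rev v : special (rev_ord v) = special v.
Proof.
rewrite /special !inE !(can2_eq rev_ordK rev_ordK) rev_hi rev_mid.
by rewrite orbC [(_ == mid) || _]orbC -orbA.
Qed.

Lemma extremeE (v : 'I_k) : ((v : nat) \in [:: 0; k.-1]) = extreme v.
Proof. by rewrite /extreme !inE -!val_eqE /= subn1. Qed.

Lemma specialE (v : 'I_k) :
  ((v : nat) \notin [:: 0; k.-1]) ==> ((v : nat) == k./2) = special v.
Proof.
by rewrite extremeE implyNb /special /extreme !inE -[v == mid]val_eqE orbA orbAC.
Qed.

End SpecialValues.

Section Cube.
Variables (n k : nat) (hk : 1 < k) (hodd : odd k).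
Implicit Types (c x y : pos n k) (m : nat).

Notation extreme := (extreme hk).
Notation special := (special hk).
Notation lo := (lo hk).
Notation mid := (mid hk).
Notation hi := (hi hk).

Lemma CsetE m x :
  (x \in Cset n k m) = [forall l, special (x l)] && (#|[set l | extreme (x l)]| == m).
Proof.
rewrite inE; congr (_ && (_ == m)).
  by apply: eq_forallb => l; rewrite specialE.
by apply: eq_card => l; rewrite !in_set extremeE.
Qed.

Lemma Cset_reindex m x y (s : {perm 'I_n}) :
  (forall l, extreme (y l) = extreme (x (s l))) ->
  (forall l, special (y l) = special (x (s l))) ->
  (y \in Cset n k m) = (x \in Cset n k m).
Proof.
move=> ext sp; rewrite !CsetE; congr (_ && (_ == m)).
  apply/forallP/forallP => H l; last by rewrite sp.
  by have := H (s^-1 l)%g; rewrite sp permKV.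
have -> : [set l | extreme (y l)] = s @^-1: [set l | extreme (x l)].
  by apply/setP => l; rewrite !inE ext.
by rewrite card_preimset //; apply: perm_inj.
Qed.

Lemma Cset_psi m (i j : 'I_n) x : (psi i j x \in Cset n k m) = (x \in Cset n k m).
Proof.
apply: (@Cset_reindex _ _ _ (tperm i j)) => l; rewrite ffunE.
- have [->|li] := eqVneq l i; first by rewrite tpermL extreme_rev.
  have [->|lj] := eqVneq l j; first by rewrite tpermR.
  by rewrite tpermD // eq_sym.
- have [->|li] := eqVneq l i; first by rewrite tpermL special_rev.
  have [->|lj] := eqVneq l j; first by rewrite tpermR.
  by rewrite tpermD // eq_sym.
Qed.

Definition in_slice (i j : 'I_n) (c x : pos n k) : bool :=
  [forall l, (l != i) && (l != j) ==> (x l == c l)].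

Lemma move_funE (i j : 'I_n) c x :
  move_fun i j c x = if in_slice i j c x then psi i j x else x.
Proof. by []. Qed.

Lemma in_sliceC (i j : 'I_n) c x : in_slice j i c x = in_slice i j c x.
Proof. by apply: eq_forallb => l; rewrite andbC. Qed.

Lemma in_slice_psi (i j : 'I_n) c x : in_slice i j c (psi i j x) = in_slice i j c x.
Proof.
apply: eq_forallb => l; case: eqVneq => [//|li]; case: eqVneq => [//|lj].
by rewrite ffunE (negbTE li) (negbTE lj).
Qed.

Lemma psiK (i j : 'I_n) : cancel (@psi n k i j) (psi j i).
Proof.
move=> x; apply/ffunP => l; rewrite !ffunE.
have [->|lj] := eqVneq l j; first by rewrite !eqxx rev_ordK.
by have [<-|//] := eqVneq l i; rewrite eq_sym (negbTE lj) eqxx.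
Qed.

Lemma move_funK (i j : 'I_n) c : cancel (move_fun i j c) (move_fun j i c).
Proof.
move=> x; rewrite [move_fun i j c x]move_funE move_funE in_sliceC.
by case xc: (in_slice i j c x); rewrite ?in_slice_psi xc ?psiK.
Qed.

Definition move_perm (i j : 'I_n) c : {perm pos n k} :=
  perm (can_inj (move_funK i j c)).

Lemma move_permE (i j : 'I_n) c : move_perm i j c =1 move_fun i j c.
Proof. exact: permE. Qed.

Lemma move_perm_astabs m (i j : 'I_n) c : move_perm i j c \in 'N(Cset n k m | 'P)%g.
Proof.
apply/astabsP => x /=; rewrite apermE move_permE move_funE.
by case: ifP; rewrite ?Cset_psi.
Qed.

Section Slice.
Variables (i j : 'I_n) (c : pos n k).
Hypothesis hij : i != j.
Implicit Types a b : 'I_k.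

Definition slice a b : pos n k :=
  [ffun l => if l == i then a else if l == j then b else c l].

Lemma slice_i a b : slice a b i = a.
Proof. by rewrite ffunE eqxx. Qed.

Lemma slice_j a b : slice a b j = b.
Proof. by rewrite ffunE eq_sym (negbTE hij) eqxx. Qed.

Lemma slice_off a b l : l != i -> l != j -> slice a b l = c l.
Proof. by rewrite ffunE => /negbTE-> /negbTE->. Qed.

Lemma slice_eq a b a' b' : (slice a b == slice a' b') = (a == a') && (b == b').
Proof.
apply/eqP/andP => [e|[/eqP-> /eqP->] //].
have := congr1 (fun x : pos n k => (x i, x j)) e.
by rewrite /= !slice_i !slice_j => -[-> ->]; rewrite !eqxx.
Qed.

Lemma in_slice_slice a b : in_slice i j c (slice a b).
Proof. by apply/forallP => l; apply/implyP => /andP[li lj]; rewrite slice_off. Qed.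

Lemma in_sliceP x : in_slice i j c x -> x = slice (x i) (x j).
Proof.
move=> /forallP xc; apply/ffunP => l; rewrite ffunE.
have [->|li] := eqVneq l i; first by [].
have [->|lj] := eqVneq l j; first by [].
by apply/eqP; apply: (implyP (xc l)); rewrite li lj.
Qed.

Lemma move_slice a b : move_fun i j c (slice a b) = slice (rev_ord b) a.
Proof.
rewrite move_funE in_slice_slice; apply/ffunP => l; rewrite ffunE.
have [->|li] := eqVneq l i; first by rewrite slice_i slice_j.
have [->|lj] := eqVneq l j; first by rewrite slice_i slice_j.
by rewrite !slice_off.
Qed.

Definition admissible : bool := [forall l, (l != i) && (l != j) ==> special (c l)].

Definition off_extremes : nat := #|[set l | [&& l != i, l != j & extreme (c l)]]|.
Local Notation t := off_extremes.

Lemma card_extreme_slice a b :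
  #|[set l | extreme (slice a b l)]| = t + extreme a + extreme b.
Proof.
rewrite (cardsD1 i) (cardsD1 j) !inE slice_i slice_j eq_sym hij /=.
suff -> : #|[set l | extreme (slice a b l)] :\ i :\ j| = t by rewrite addnA addnC addnA.
apply: eq_card => l; rewrite !inE.
by case: eqVneq => //= lj; case: eqVneq => //= li; rewrite slice_off.
Qed.

Lemma mem_Cset_slice m a b : (slice a b \in Cset n k m) =
  [&& special a, special b, admissible & t + extreme a + extreme b == m].
Proof.
rewrite CsetE card_extreme_slice !andbA; congr (_ && _); rewrite -andbA.
apply/forallP/and3P => [sp|[sa sb /forallP adm] l].
  split; [by have := sp i; rewrite slice_i | by have := sp j; rewrite slice_j |].
  by apply/forallP => l; apply/implyP => /andP[li lj]; have := sp l; rewrite slice_off.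
have [->|li] := eqVneq l i; first by rewrite slice_i.
have [->|lj] := eqVneq l j; first by rewrite slice_j.
by rewrite slice_off //; apply: (implyP (adm l)); rewrite li lj.
Qed.

Lemma off_extremes_leq : t.+2 <= n.
Proof.
have := max_card [set l | extreme (slice lo lo l)].
by rewrite card_extreme_slice card_ord extreme_values //= !addn1.
Qed.

Local Notation restr_move m := (restr_perm (Cset n k m) (move_perm i j c)).

Lemma restr_moveE m x :
  restr_move m x = if x \in Cset n k m then move_fun i j c x else x.
Proof.
case: ifP => xC; first by rewrite restr_permE ?move_perm_astabs ?move_permE.
by rewrite (out_perm (restr_perm_on _ _)) ?xC.
Qed.

Lemma restr_move_slice m a b :
  slice a b \in Cset n k m -> restr_move m (slice a b) = slice (rev_ord b) a.
Proof. by move=> abC; rewrite restr_moveE abC move_slice. Qed.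

Lemma restr_move_moved m x : restr_move m x != x ->
  exists a b, x = slice a b /\
    [&& special a, special b, admissible & t + extreme a + extreme b == m].
Proof.
rewrite restr_moveE move_funE; case: ifP => [xC|]; last by rewrite eqxx.
case: ifP => [/in_sliceP xE _|]; last by rewrite eqxx.
by exists (x i), (x j); rewrite -mem_Cset_slice -xE.
Qed.

Lemma odd_restr_move_SS : admissible -> odd_perm (restr_move t.+2).
Proof.
move=> adm.
apply: (@odd_perm_4cycle _ _ (slice lo lo) (slice hi lo) (slice hi hi) (slice lo hi));
  rewrite ?restr_move_slice ?mem_Cset_slice ?adm ?special_values ?extreme_values
          ?rev_hi ?addn1 ?eqxx //.
- by rewrite /= !inE !slice_eq !special_eqF ?eqxx.
move=> x /restr_move_moved[a [b [-> /and4P[sa sb _ tE]]]].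
move: sa sb tE; rewrite /special !inE => /or3P[]/eqP-> /or3P[]/eqP->;
  rewrite ?extreme_values //= ?inE ?eqxx ?orbT //; lia.
Qed.

Lemma odd_restr_move_S : admissible -> odd_perm (restr_move t.+1).
Proof.
move=> adm.
apply: (@odd_perm_4cycle _ _ (slice lo mid) (slice mid lo) (slice hi mid) (slice mid hi));
  rewrite ?restr_move_slice ?mem_Cset_slice ?adm ?special_values ?extreme_values
          ?rev_mid ?rev_hi ?addn0 ?addn1 ?eqxx //.
- by rewrite /= !inE !slice_eq !special_eqF ?eqxx.
move=> x /restr_move_moved[a [b [-> /and4P[sa sb _ tE]]]].
move: sa sb tE; rewrite /special !inE => /or3P[]/eqP-> /or3P[]/eqP->;
  rewrite ?extreme_values //= ?inE ?eqxx ?orbT //; lia.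
Qed.

Lemma restr_move_id m :
  ~~ (admissible && (m \in [:: t.+1; t.+2])) -> restr_move m = 1%g.
Proof.
move=> hm; apply/permP => x; rewrite perm1; apply: contraNeq hm => moved.
have [a [b [xE abC]]] := restr_move_moved moved.
move: moved; rewrite xE restr_move_slice ?mem_Cset_slice //.
case/and4P: abC => sa sb -> /eqP <-.
move: sa sb; rewrite /special !inE => /or3P[]/eqP-> /or3P[]/eqP->;
  by rewrite ?extreme_values ?rev_mid ?rev_hi ?eqxx ?addn0 ?addn1 ?eqxx ?orbT.
Qed.

Lemma prod_restr_sign_move :
  (\prod_(1 <= m < n.+1) restr_sign (Cset n k m) (move_perm i j c) = 1)%R.
Proof.
have [adm|nadm] := boolP admissible; last first.
  by rewrite big1 // => m _; rewrite /restr_sign restr_move_id ?(negbTE nadm) ?odd_perm1.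
have [t1 t2] : t.+1 \in index_iota 1 n.+1 /\ t.+2 \in index_iota 1 n.+1.
  by rewrite !mem_index_iota; have := off_extremes_leq; lia.
rewrite (big_rem t.+1) // (big_rem t.+2) ?mem_rem_uniq ?iota_uniq ?inE ?t2 ?gtn_eqF //.
rewrite big1_seq => [|m /andP[_]]; last first.
  rewrite mem_rem_uniq ?rem_uniq ?iota_uniq // inE mem_rem_uniq ?iota_uniq // inE.
  move=> /andP[m2 /andP[m1 _]].
  by rewrite /restr_sign restr_move_id ?odd_perm1 // adm !inE negb_or m1 m2.
by rewrite /restr_sign odd_restr_move_S // odd_restr_move_SS // mulr1 mulrNN mulr1.
Qed.

End Slice.

Definition moves_perm (s : seq ('I_n * 'I_n * pos n k)) : {perm pos n k} :=
  (\prod_(mv <- s) move_perm mv.1.1 mv.1.2 mv.2)%g.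

Lemma moves_permE s : moves_perm s =1 apply_moves s.
Proof.
elim: s => [|mv s IH] x; first by rewrite /moves_perm big_nil perm1.
by rewrite /moves_perm big_cons permM -/(moves_perm s) IH move_permE.
Qed.

Lemma moves_perm_astabs m s : moves_perm s \in 'N(Cset n k m | 'P)%g.
Proof. by apply: group_prod => mv _; apply: move_perm_astabs. Qed.

Lemma prod_restr_sign_moves s : all (fun mv => mv.1.1 != mv.1.2) s ->
  (\prod_(1 <= m < n.+1) restr_sign (Cset n k m) (moves_perm s) = 1)%R.
Proof.
elim: s => [_|[[i j] c] s IH /= /andP[hij /IH prod_s]].
  by rewrite big1 // => m _; rewrite /moves_perm big_nil restr_sign1.
rewrite /moves_perm big_cons -/(moves_perm s).
under eq_bigr => m _ do rewrite restr_signM ?move_perm_astabs ?moves_perm_astabs //.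
by rewrite big_split /= prod_restr_sign_move // prod_s mulr1.
Qed.

End Cube.

Unset Implicit Arguments.
Local Open Scope ring_scope.

Theorem mainTheorem10 (k n : nat) (hk : (2 <= k)%N) (hodd : odd k) (hn : (3 <= n)%N)
  (g : {perm pos n k}) (hg : is_combination g) :
  (forall m : nat, (1 <= m <= n)%N -> g @: Cset n k m = Cset n k m) /\
  \prod_(1 <= m < n.+1) ((-1) ^+ odd_perm (restr_perm (Cset n k m) g) : int) = 1.
Proof.
case: hg => s [hs gE].
have -> : g = moves_perm s by apply/permP => x; rewrite gE moves_permE.
split => [m _|]; first exact: astabs_setact (moves_perm_astabs hk hodd m s).
exact: prod_restr_sign_moves.
Qed.
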